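(* Let $n=2$, $f\in\mathcal{E}$, and let $\widetilde f$ be a harmonic extension of $f$. Then $$\|\widetilde\nabla^{1,1}\widetilde f\|^2:=\widetilde g^{I\bar L}\widetilde g^{K\bar J}\,(\partial_{\zeta_I}\partial_{\bar\zeta_J}\widetilde f)\,(\partial_{\zeta_K}\partial_{\bar\zeta_L}\widetilde f)$$ vanishes identically on $\mathcal{N}$.
   Context: For $n=2$: on $\mathbb{C}^{3}$ with coordinates $\zeta=(\zeta_0,\zeta_1,\zeta_2)$ put $L(\zeta)=|\zeta_0|^2-|\zeta_1|^2-|\zeta_2|^2$, $\mathcal{N}=\{\zeta\ne0:L=0\}$, $\Delta=\partial_{\zeta_0}\partial_{\bar\zeta_0}-\partial_{\zeta_1}\partial_{\bar\zeta_1}-\partial_{\zeta_2}\partial_{\bar\zeta_2}$, $\widetilde g^{K\bar L}=\mathrm{diag}(1,-1,-1)$ (summation over repeated indices). $\mathcal{E}=\{f\in C^\infty(\mathcal{N},\mathbb{R}):f(\lambda\zeta)=f(\zeta)\ \forall\lambda\in\mathbb{C}^*\}$. A harmonic extension of $f\in\mathcal{E}$ is a smooth $\widetilde f$ on $\mathbb{C}^{3}\setminus\{0\}$ with $\widetilde f(\lambda\zeta)=\widetilde f(\zeta)$, $\widetilde f|_{\mathcal{N}}=f$, and $\Delta\widetilde f=L\,h$ for some smooth $h$. *)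

From HB Require Import structures.
From mathcomp Require Import all_boot all_order all_algebra.
From mathcomp Require Import all_classical all_reals all_analysis.
From mathcomp Require Import complex.
Set Implicit Arguments. Unset Strict Implicit. Unset Printing Implicit Defensive.
Import Order.TTheory GRing.Theory Num.Theory.
Import numFieldNormedType.Exports.
Local Open Scope ring_scope.

(* A point zeta of C^3 is encoded by its 6 real coordinates x : 'rV[R]_(3+3):
   x (re I) = Re zeta_I,  x (im I) = Im zeta_I   (I : 'I_3). *)
Section C3.
Variable R : realType.
Notation V := 'rV[R]_(3 + 3).

Definition re (I : 'I_3) : 'I_(3 + 3) := lshift 3 I.
Definition im (I : 'I_3) : 'I_(3 + 3) := rshift 3 I.

Definition zeta (x : V) (I : 'I_3) : R[i] := Complex (x ord0 (re I)) (x ord0 (im I)).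

Definition of_zeta (z : 'I_3 -> R[i]) : V :=
  \row_k match fintype.split k with
         | inl i0 => complex.Re (z i0)
         | inr i0 => complex.Im (z i0)
         end.

Definition cscale (l : R[i]) (x : V) : V := of_zeta (fun I => l * zeta x I).

Definition ebasis (k : 'I_(3 + 3)) : V := delta_mx 0 k.
Definition pd (k : 'I_(3 + 3)) (f : V -> R) : V -> R := fun x => 'D_(ebasis k) f x.

Definition iter_pd (ks : seq 'I_(3 + 3)) (f : V -> R) : V -> R :=
  foldr pd f ks.

Definition smooth (f : V -> R) : Prop :=
  forall (ks : seq 'I_(3 + 3)) (x : V), x != 0 ->
    (forall k, derivable (iter_pd ks f) x (ebasis k)) /\
    {for x, continuous (iter_pd ks f)}.

Definition Lform (x : V) : R :=
  let sq I := x ord0 (re I) ^+ 2 + x ord0 (im I) ^+ 2 in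
  sq 0 - sq 1 - sq 2.

Definition Ncone (x : V) : Prop := x != 0 /\ Lform x = 0.

(* d_{zeta_I} d_{bar zeta_J} f for real-valued f, written out in real
   coordinates: d_{zeta_I} = (d_{x_I} - i d_{y_I})/2,
   d_{bar zeta_J} = (d_{x_J} + i d_{y_J})/2. *)
Definition ddbar (I J : 'I_3) (f : V -> R) (x : V) : R[i] :=
  Complex ((pd (re I) (pd (re J) f) x + pd (im I) (pd (im J) f) x) / 4)
          ((pd (re I) (pd (im J) f) x - pd (im I) (pd (re J) f) x) / 4).

Definition Delta (f : V -> R) (x : V) : R[i] :=
  ddbar 0 0 f x - ddbar 1 1 f x - ddbar 2 2 f x.

Definition ginv (K L : 'I_3) : R[i] :=
  if K == L then (if K == 0 then 1 else -1) else 0.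

Definition hess11_norm2 (f : V -> R) (x : V) : R[i] :=
  \sum_(I < 3) \sum_(J < 3) \sum_(K < 3) \sum_(L < 3)
    ginv I L * ginv K J * ddbar I J f x * ddbar K L f x.

Definition homog0 (f : V -> R) : Prop :=
  forall (l : R[i]) (x : V), l != 0 -> f (cscale l x) = f x.

(* f in E: smooth real function on N (i.e. the restriction of a smooth
   function on the open set C^3\{0} in which N is a closed embedded
   submanifold), invariant under C^* on N. *)
Definition in_E (f : V -> R) : Prop :=
  (exists F : V -> R, smooth F /\ forall x, Ncone x -> F x = f x) /\
  (forall (l : R[i]) (x : V), l != 0 -> Ncone x -> f (cscale l x) = f x).

Definition harmonic_extension (f ft : V -> R) : Prop :=
  [/\ smooth ft, homog0 ft,
      (forall x, Ncone x -> ft x = f x) &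
      exists h : V -> R, smooth h /\
        forall x, x != 0 -> Delta ft x = Complex (Lform x * h x) 0].
End C3.

(* Homogeneity of degree 0 under C^* gives the Euler identities
   sum_I zeta_I d_I f = 0 and sum_J conj(zeta_J) dbar_J f = 0; differentiating them, the
   complex Hessian H = (d_I dbar_J f) satisfies zeta^T H = 0 and H conj(zeta) = 0.  On the
   null cone the equation Delta f = L h gives tr(eta H) = 0, and L(zeta) = 0 says that the
   left null vector eta zeta of M = eta H is orthogonal to its right null vector conj(zeta).
   Hence 0 is an eigenvalue of multiplicity at least 2 of the 3x3 matrix M, whose trace
   vanishes, so M is nilpotent and |nabla^{1,1} f|^2 = tr(M^2) = 0.
   In real coordinates, the Euler identities come from differentiating F(s y) = F(y) and
   F(y + t i y) = F(y). *)

From Pilot Require Import Defs.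
From HB Require Import structures.
From mathcomp Require Import all_boot all_order all_algebra.
From mathcomp Require Import all_classical all_reals all_analysis.
From mathcomp Require Import complex ring lra.
Set Implicit Arguments. Unset Strict Implicit. Unset Printing Implicit Defensive.
Import Order.TTheory GRing.Theory Num.Theory.
Import numFieldNormedType.Exports.
Local Open Scope ring_scope.

(* [all_analysis] also exports a [cscale] (scaling of charges). *)
Local Notation cscale := Defs.cscale.

Section RealLine.
Variable R : realType.
Local Open Scope classical_set_scope.

Lemma mvt_deviation_bound (phi dphi : R -> R) (T c eps : R) :
  (forall s : R, `|s| <= `|T| -> is_derive s 1 phi (dphi s)) ->
  (forall s : R, `|s| <= `|T| -> `|dphi s - c| <= eps) ->
  `|phi T - phi 0 - c * T| <= eps * `|T|.
Proof.
move=> hd hb.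
have cont a b : (forall s, a <= s <= b -> `|s| <= `|T|) ->
    {within `[a, b], continuous phi}.
  move=> hab; apply: continuous_in_subspaceT => s.
  rewrite inE /= in_itv /= => /hab /hd [dv _].
  exact/differentiable_continuous/derivable1_diffP.
have [T0|T0] := leP 0 T.
  have [xi] : exists2 xi, xi \in `[0, T]%R & phi T - phi 0 = dphi xi * (T - 0).
    apply: (MVT_segment (f:=phi)) => // [s|].
      by rewrite in_itv /= => /andP[s0 sT]; apply: hd; rewrite !ger0_norm // ltW.
    by apply: cont => s /andP[s0 sT]; rewrite !ger0_norm.
  rewrite in_itv /= => /andP[x0 xT] ->.
  by rewrite subr0 -mulrBl normrM ler_wpM2r // hb // !ger0_norm.
have [xi] : exists2 xi, xi \in `[T, 0]%R & phi 0 - phi T = dphi xi * (0 - T).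
  apply: MVT_segment => [|s|]; first exact: ltW.
    by rewrite in_itv /= => /andP[s0 sT]; apply: hd; rewrite !ltr0_norm // ?lerN2 ?ltW.
  by apply: cont => s /andP[s0 sT]; rewrite !ler0_norm ?lerN2 // ltW.
rewrite in_itv /= => /andP[x0 xT] E.
have -> : phi T - phi 0 - c * T = (dphi xi - c) * T.
  by move: E; rewrite sub0r => E; lra.
by rewrite normrM ler_wpM2r // hb // !ler0_norm ?lerN2 // ltW.
Qed.

End RealLine.

Section Directional.
Variables (R : realType) (V : normedModType R).
Local Open Scope classical_set_scope.

Lemma is_derive_along_line (g : V -> R) (z e : V) (s : R) :
  derivable g (z + s *: e) e ->
  is_derive s 1 (fun t : R => g (z + t *: e)) ('D_e g (z + s *: e)).
Proof.
have qE : (fun h : R => h^-1 *: (((fun t => g (z + t *: e)) \o shift s) (h *: 1)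
      - g (z + s *: e))) =
    (fun h : R => h^-1 *: ((g \o shift (z + s *: e)) (h *: e) - g (z + s *: e))).
  by apply/funext => h /=; rewrite scaler1 scalerDl addrCA.
by move=> hd; split; rewrite /derivable /derive qE.
Qed.

Lemma norm_sub_combination_le n (a : 'I_n -> R) (e : 'I_n -> V) (P : pred 'I_n) :
  `|\sum_(j | P j) a j *: e j| <= \sum_j `|a j| * `|e j|.
Proof.
apply: le_trans (ler_norm_sum _ _ _) _.
apply: (@le_trans _ _ (\sum_(j | P j) `|a j| * `|e j|)).
  by apply: ler_sum => j _; rewrite normrZ.
rewrite [leRHS](bigID P) /= lerDl.
by rewrite sumr_ge0 // => j _; rewrite mulr_ge0.
Qed.

Lemma partials_increment_bound n (g : V -> R) (x : V) (e : 'I_n -> V) (a : 'I_n -> R)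
    (r eps h : R) :
  (forall y, ball x r y -> forall k,
     derivable g y (e k) /\ `|'D_(e k) g y - 'D_(e k) g x| <= eps) ->
  2 * (`|h| * \sum_k `|a k| * `|e k|) < r ->
  `|g (x + h *: \sum_k a k *: e k) - g x - h * \sum_k a k * 'D_(e k) g x|
    <= eps * (`|h| * \sum_k `|a k|).
Proof.
move=> hball; set M := \sum_k `|a k| * `|e k| => hr.
(* telescope along the broken line through the points x + h (a_0 e_0 + ... + a_(k-1) e_(k-1)),
   using the mean value theorem on each segment *)
pose w (k : nat) : V := \sum_(j < n | (j < k)%N) a j *: e j.
pose z (k : nat) := x + h *: w k.
have wS (k : 'I_n) : w k.+1 = w k + a k *: e k.
  rewrite /w (bigD1 k) /= ?ltnS ?leqnn // addrC; congr (_ + _).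
  by apply: eq_bigl => j; rewrite ltnS ltn_neqAle andbC.
have wM k : `|w k| <= M by exact: norm_sub_combination_le.
have aeM k : `|a k| * `|e k| <= M.
  by rewrite /M (bigD1 k) //= lerDl sumr_ge0 // => j _; rewrite mulr_ge0.
have segment_in_ball (k : 'I_n) s : `|s| <= `|h * a k| -> ball x r (z k + s *: e k).
  move=> hs; rewrite -ball_normE /ball_ /=.
  have -> : x - (z k + s *: e k) = - (h *: w k + s *: e k).
    by rewrite /z opprD !opprD !addrA subrr sub0r.
  rewrite normrN; apply: le_lt_trans (ler_normD _ _) _; rewrite !normrZ.
  have hw : `|h| * `|w k| <= `|h| * M by rewrite ler_wpM2l.
  have he : `|s| * `|e k| <= `|h| * M.
    apply: le_trans (_ : `|h * a k| * `|e k| <= _); first by rewrite ler_wpM2r.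
    by rewrite normrM -mulrA ler_wpM2l.
  lra.
have step (k : 'I_n) :
    `|g (z k.+1) - g (z k) - 'D_(e k) g x * (h * a k)| <= eps * `|h * a k|.
  have -> : z k.+1 = z k + (h * a k) *: e k by rewrite /z wS scalerDr addrA scalerA.
  have := @mvt_deviation_bound R (fun s => g (z k + s *: e k))
    (fun s => 'D_(e k) g (z k + s *: e k)) (h * a k) ('D_(e k) g x) eps.
  rewrite /= scale0r addr0; apply => s /segment_in_ball /hball/(_ k) [dk Dk] //.
  exact: is_derive_along_line.
have -> : g (x + h *: \sum_k a k *: e k) - g x = \sum_(k < n) (g (z k.+1) - g (z k)).
  rewrite -(big_mkord xpredT (fun k => g (z k.+1) - g (z k))) telescope_sumr //.
  have w0 : w 0%N = 0 by rewrite /w big_pred0.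
  have wn : w n = \sum_k a k *: e k by apply: eq_bigl => j; rewrite ltn_ord.
  by rewrite /z w0 wn scaler0 addr0.
rewrite mulr_sumr -sumrB; apply: le_trans (ler_norm_sum _ _ _) _.
rewrite mulr_sumr mulr_sumr; apply: ler_sum => k _.
by rewrite mulrA [h * a k * _]mulrC -normrM; exact: step.
Qed.

Lemma is_derive_partials_sum n (g : V -> R) (x : V) (e : 'I_n -> V) (a : 'I_n -> R) :
  (\forall y \near x, forall k, derivable g y (e k)) ->
  (forall k, {for x, continuous (fun y => 'D_(e k) g y)}) ->
  is_derive x (\sum_k a k *: e k) g (\sum_k a k * 'D_(e k) g x).
Proof.
move=> hder hcont; set c := \sum_k a k * 'D_(e k) g x; set v := \sum_k a k *: e k.
suff hc : (fun h : R => h^-1 *: ((g \o shift x) (h *: v) - g x)) @ 0^' --> c.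
  by split; [exact: (cvgP _ hc) | exact: cvg_lim hc].
apply/cvgrPdist_le => eps eps0.
set S := \sum_k `|a k|; set M := \sum_k `|a k| * `|e k|.
have S0 : 0 <= S by apply: sumr_ge0 => k _.
have M0 : 0 <= M by apply: sumr_ge0 => k _; rewrite mulr_ge0.
set eps' := eps / (S + 1).
have eps'0 : 0 < eps' by rewrite divr_gt0 // ltr_wpDl.
have : \forall y \near x, forall k,
    derivable g y (e k) /\ `|'D_(e k) g y - 'D_(e k) g x| <= eps'.
  have hk : \forall y \near x, forall k, `|'D_(e k) g x - 'D_(e k) g y| <= eps'.
    by apply: filter_forall => k; move/cvgrPdist_le: (hcont k) => /(_ eps' eps'0).
  by move: hder hk; apply: filterS2 => y H1 H2 k; rewrite distrC.
move/nbhs_ballP => [r /= r0 hball].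
have del0 : 0 < r / (2 * M + 1) by rewrite divr_gt0 // ltr_wpDl // mulr_ge0.
rewrite near_withinE /=; near=> h => hN0.
have hr : 2 * (`|h| * M) < r.
  have : `|h| < r / (2 * M + 1).
    near: h; apply/nbhs_ballP; exists (r / (2 * M + 1)) => //= t.
    by rewrite /ball /= sub0r normrN.
  rewrite ltr_pdivlMr ?ltr_wpDl ?mulr_ge0 // => hlt.
  have : 0 <= `|h| by [].
  nra.
have := partials_increment_bound hball hr; rewrite -/S -/v -/c => bound.
have hp : 0 < `|h| by rewrite normr_gt0.
rewrite /= /shift /= [h *: v + x]addrC.
have -> : c - h^-1 *: (g (x + h *: v) - g x) = - h^-1 * (g (x + h *: v) - g x - h * c).
  by rewrite [_ *: _]/GRing.scale /=; field.
rewrite normrM normrN normfV -ler_pdivlMl ?invr_gt0 // invrK.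
apply: (le_trans bound).
have : eps' * S <= eps by rewrite /eps' mulrAC ler_pdivrMr ?ltr_wpDl //; nra.
nra.
Unshelve. all: by end_near. Qed.

Lemma is_derive_expansion (G : V -> R) (x v : V) (phi : R -> R) :
  (\forall t \near 0, G (x + t *: v) = G x + t * phi t) ->
  {for 0, continuous phi} -> is_derive x v G (phi 0).
Proof.
move=> hG hphi.
have hc : (fun h : R => h^-1 *: ((G \o shift x) (h *: v) - G x)) @ 0^' --> phi 0.
  move/continuous_withinNx : hphi; apply: cvg_trans; apply: near_eq_cvg.
  rewrite near_withinE; near=> t => t0 /=.
  have -> : G (t *: v + x) = G x + t * phi t by rewrite addrC; near: t.
  by rewrite [_ *: _]/GRing.scale /=; field.
by split; [exact: (cvgP _ hc) | exact: cvg_lim hc].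
Unshelve. all: by end_near. Qed.

Lemma cvg_line (x v : V) : (fun t : R => x + t *: v) @ 0 --> x.
Proof.
rewrite -[X in _ --> X]addr0 -(scale0r v).
by apply: cvgD; [exact: cvg_cst | exact: scalel_continuous].
Qed.

Lemma near_line (x v : V) (P : set V) :
  (\forall y \near x, P y) -> \forall t \near 0, P (x + t *: v).
Proof. exact: cvg_line. Qed.

Lemma continuous_line (G : V -> R) (x v : V) :
  {for x, continuous G} -> {for 0, continuous (fun t : R => G (x + t *: v))}.
Proof.
move=> hG; have Gline := cvg_comp _ _ (@cvg_line x v) hG.
by move=> P /=; rewrite scale0r addr0 => /Gline.
Qed.

Lemma near_neq0 (x : V) : x != 0 -> \forall y \near x, y != 0.
Proof. exact: (@cvgr_neq0 _ _ _ (nbhs x) _ id x cvg_id). Qed.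

Lemma derive_comp_invariant (G : V -> R) (M : V -> V) (y e : V) :
  (forall (c : R) u w, M (c *: u + w) = c *: M u + M w) ->
  (forall z, G (M z) = G z) ->
  'D_e G y = 'D_(M e) G (M y).
Proof.
move=> Mlin GM; rewrite /derive.
suff -> : (fun h : R => h^-1 *: ((G \o shift y) (h *: e) - G y)) =
  (fun h : R => h^-1 *: ((G \o shift (M y)) (h *: M e) - G (M y))) by [].
by apply/funext => h /=; rewrite -Mlin !GM.
Qed.

End Directional.

Lemma sum3 (K : zmodType) (G : 'I_3 -> K) : \sum_(i < 3) G i = G 0 + G 1 + G 2.
Proof.
by rewrite !big_ord_recr big_ord0 /= add0r; congr (G _ + G _ + G _); apply: val_inj.
Qed.

Definition eta {K : pzRingType} (I : 'I_3) : K := if I == 0 then 1 else -1.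

Lemma sum_eta (K : pzRingType) (d : 'I_3 -> K) : \sum_I eta I * d I = d 0 - d 1 - d 2.
Proof. by rewrite sum3 /eta /= mul1r !mulN1r. Qed.

Lemma eta_trace_sqr_eq0 (K : fieldType) (H : 'I_3 -> 'I_3 -> K) (z p : 'I_3 -> K) :
  (forall J, \sum_I z I * H I J = 0) ->
  (forall I, \sum_J H I J * p J = 0) ->
  \sum_I eta I * H I I = 0 ->
  \sum_I eta I * (z I * p I) = 0 ->
  (exists I, z I * p I != 0) ->
  \sum_I \sum_J eta I * eta J * H I J * H J I = 0.
Proof.
(* For the index I with z I * p I != 0, that product times the conclusion is an explicit
   combination of the four families of hypotheses. *)
move=> zH Hp tr nul [I nzI]; apply: (mulfI nzI); rewrite mulr0.
have [->|[->|->]] : I = 0 \/ I = 1 \/ I = 2.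
  by case: I nzI => -[|[|[|//]]] ? _; [left|right; left|right; right]; apply: val_inj.
- transitivity ((2 * H 1 2 * p 2 - 2 * H 2 2 * p 1) * (\sum_I z I * H I 1)
      + (- 2 * H 1 1 * p 2 + 2 * H 2 1 * p 1) * (\sum_I z I * H I 2)
      + (2 * H 1 1 * z 0 + 2 * H 2 2 * z 0) * (\sum_J H 0 J * p J)
      + (- 2 * H 0 1 * z 0) * (\sum_J H 1 J * p J)
      + (- 2 * H 0 2 * z 0) * (\sum_J H 2 J * p J)
      + (H 0 0 * z 0 * p 0 + H 1 1 * z 0 * p 0 - 2 * H 1 1 * z 1 * p 1
         - 2 * H 1 1 * z 2 * p 2 - H 2 2 * z 0 * p 0)
        * (\sum_I eta I * H I I)
      + (- 2 * H 0 0 * H 1 1 + 2 * H 1 1 * H 1 1 + 2 * H 1 2 * H 2 1)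
        * (\sum_I eta I * (z I * p I)));
    first by rewrite /eta !sum3 /=; ring.
  by rewrite !zH !Hp tr nul !mulr0 !addr0.
- transitivity ((2 * H 0 2 * p 2) * (\sum_I z I * H I 0)
      + (- 2 * H 2 2 * p 1) * (\sum_I z I * H I 1)
      + (- 2 * H 0 0 * p 2 + 2 * H 2 1 * p 1) * (\sum_I z I * H I 2)
      + (- 2 * H 1 0 * z 1 + 2 * H 2 2 * z 0) * (\sum_J H 0 J * p J)
      + (2 * H 0 0 * z 1) * (\sum_J H 1 J * p J)
      + (- 2 * H 0 2 * z 0) * (\sum_J H 2 J * p J)
      + (2 * H 0 0 * z 0 * p 0 - H 0 0 * z 1 * p 1 - 2 * H 0 0 * z 2 * p 2
         - H 1 1 * z 1 * p 1 - H 2 2 * z 1 * p 1)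
        * (\sum_I eta I * H I I)
      + (- 2 * H 0 0 * H 0 0 + 2 * H 0 0 * H 1 1 + 2 * H 0 2 * H 2 0)
        * (\sum_I eta I * (z I * p I)));
    first by rewrite /eta !sum3 /=; ring.
  by rewrite !zH !Hp tr nul !mulr0 !addr0.
- transitivity ((- 2 * H 0 2 * p 2) * (\sum_I z I * H I 0)
      + (2 * H 1 2 * p 2) * (\sum_I z I * H I 1)
      + (H 0 0 * p 2 - H 1 1 * p 2 + H 2 2 * p 2) * (\sum_I z I * H I 2)
      + (H 0 0 * z 0 + 2 * H 1 0 * z 1 + H 1 1 * z 0 - H 2 2 * z 0) * (\sum_J H 0 J * p J)
      + (- H 0 0 * z 1 - 2 * H 0 1 * z 0 - H 1 1 * z 1 - H 2 2 * z 1) * (\sum_J H 1 J * p J)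
      + (- H 0 0 * z 0 * p 0 + H 0 0 * z 2 * p 2 - H 0 1 * z 0 * p 1
         - H 1 0 * z 1 * p 0 - H 1 1 * z 1 * p 1 - H 1 1 * z 2 * p 2)
        * (\sum_I eta I * H I I)
      + (- 2 * H 0 0 * H 1 1 + 2 * H 0 1 * H 1 0) * (\sum_I eta I * (z I * p I)));
    first by rewrite /eta !sum3 /=; ring.
  by rewrite !zH !Hp tr nul !mulr0 !addr0.
Qed.

Section Coordinates.
Variable R : realType.
Local Open Scope complex_scope.
Local Notation V := 'rV[R]_(3 + 3).

Lemma of_zeta_re (z : 'I_3 -> R[i]) I : of_zeta z ord0 (re I) = complex.Re (z I).
Proof. by rewrite mxE /re -[lshift 3 I]/(unsplit (inl I)) unsplitK. Qed.

Lemma of_zeta_im (z : 'I_3 -> R[i]) I : of_zeta z ord0 (im I) = complex.Im (z I).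
Proof. by rewrite mxE /im -[rshift 3 I]/(unsplit (inr I)) unsplitK. Qed.

Lemma zeta_inj (u w : V) : (forall I, zeta u I = zeta w I) -> u = w.
Proof.
move=> uw; apply/rowP => k; rewrite -(splitK k).
by case: (fintype.split k) => I; case: (uw I).
Qed.

Lemma zeta_cscale (l : R[i]) (y : V) I : zeta (cscale l y) I = l * zeta y I.
Proof. by rewrite /zeta /cscale of_zeta_re of_zeta_im; case: (l * _). Qed.

Lemma zetaD (u w : V) I : zeta (u + w) I = zeta u I + zeta w I.
Proof. by rewrite /zeta !mxE. Qed.

Lemma zetaN (y : V) I : zeta (- y) I = - zeta y I.
Proof. by rewrite /zeta !mxE. Qed.

Lemma zetaZ (s : R) (y : V) I : zeta (s *: y) I = s%:C * zeta y I.
Proof.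
by rewrite /zeta !mxE; apply/eqP; rewrite eq_complex /= !mul0r subr0 addr0 !eqxx.
Qed.

Lemma cscale_real (s : R) (y : V) : cscale s%:C y = s *: y.
Proof. by apply: zeta_inj => I; rewrite zeta_cscale zetaZ. Qed.

Lemma cscale_rot (t : R) (y : V) : cscale (1 +i* t) y = y + t *: cscale 'i y.
Proof.
apply: zeta_inj => I; rewrite zetaD zetaZ !zeta_cscale.
by apply/eqP; rewrite eq_complex /=; apply/andP; split; apply/eqP; ring.
Qed.

Lemma cscale_linear (l : R[i]) (s : R) (u w : V) :
  cscale l (s *: u + w) = s *: cscale l u + cscale l w.
Proof. by apply: zeta_inj => I; rewrite !(zetaD, zetaZ, zeta_cscale); ring. Qed.

Lemma zeta_ebasis_re I J : zeta (ebasis R (re I)) J = (I == J)%:R%:C.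
Proof.
by rewrite /zeta /ebasis !mxE /re /im eq_rlshift eq_lshift [J == I]eq_sym; case: (I == J).
Qed.

Lemma zeta_ebasis_im I J : zeta (ebasis R (im I)) J = 'i * (I == J)%:R%:C.
Proof.
rewrite /zeta /ebasis !mxE /re /im eq_lrshift eq_rshift [J == I]eq_sym.
by case: (I == J); apply/eqP;
  rewrite eq_complex /= ?(mul0r, mulr0, mul1r, subr0, add0r, oppr0) ?eqxx.
Qed.

Lemma cscale_i_ebasis_re I : cscale 'i (ebasis R (re I)) = ebasis R (im I).
Proof. by apply: zeta_inj => J; rewrite zeta_cscale zeta_ebasis_re zeta_ebasis_im. Qed.

Lemma cscale_i_ebasis_im I : cscale 'i (ebasis R (im I)) = - ebasis R (re I).
Proof.
apply: zeta_inj => J.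
by rewrite zeta_cscale zetaN zeta_ebasis_re zeta_ebasis_im mulrA -expr2 sqr_i mulN1r.
Qed.

Lemma cscale_i_re (y : V) I : cscale 'i y ord0 (re I) = - y ord0 (im I).
Proof. by rewrite of_zeta_re /zeta /= mul0r mul1r sub0r. Qed.

Lemma cscale_i_im (y : V) I : cscale 'i y ord0 (im I) = y ord0 (re I).
Proof. by rewrite of_zeta_im /zeta /= mul0r mul1r ?addr0 ?add0r. Qed.

Lemma zeta_neq0 (y : V) : y != 0 -> exists I, zeta y I != 0.
Proof.
move=> y0; apply/existsP; apply: contraNT y0 => /existsPn y0.
by apply/eqP/zeta_inj => I; rewrite (eqP (negbNE (y0 I))) /zeta !mxE.
Qed.

Lemma sum6 (K : zmodType) (G : 'I_(3 + 3) -> K) :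
  \sum_k G k = G (re 0) + G (re 1) + G (re 2) + (G (im 0) + G (im 1) + G (im 2)).
Proof. by rewrite big_split_ord !sum3. Qed.

Lemma Lform_zeta (y : V) : \sum_I eta I * (zeta y I * (zeta y I)^*) = (Lform y)%:C.
Proof.
rewrite sum_eta /Lform; apply/eqP; rewrite eq_complex /=.
by apply/andP; split; apply/eqP; ring.
Qed.

Lemma Delta_eta (G : V -> R) (y : V) : Delta G y = \sum_I eta I * ddbar I I G y.
Proof. by rewrite (sum_eta (fun I => ddbar I I G y)). Qed.

Lemma sum_ginv_eta (H : 'I_3 -> 'I_3 -> R[i]) :
  \sum_I \sum_J \sum_K \sum_L ginv R I L * ginv R K J * H I J * H K L =
  \sum_I \sum_J eta I * eta J * H I J * H J I.
Proof. by rewrite !sum3 /ginv /eta /=; ring. Qed.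

Lemma hess11_norm2_eta (G : V -> R) (y : V) :
  hess11_norm2 G y = \sum_I \sum_J eta I * eta J * ddbar I J G y * ddbar J I G y.
Proof. exact: (sum_ginv_eta (fun I J => ddbar I J G y)). Qed.

Definition wirtinger (D : 'I_(3 + 3) -> 'I_(3 + 3) -> R) (I J : 'I_3) : R[i] :=
  ((D (re I) (re J) + D (im I) (im J)) / 4) +i* ((D (re I) (im J) - D (im I) (re J)) / 4).

Section WirtingerEuler.
Variables (D : 'I_(3 + 3) -> 'I_(3 + 3) -> R) (g : 'I_(3 + 3) -> R) (y : V).

Lemma wirtinger_zeta_left J0 :
  (forall b, \sum_k y ord0 k * D k b = - g b) ->
  (forall I, \sum_k cscale 'i y ord0 k * D k (re I) = - g (im I)) ->
  (forall I, \sum_k cscale 'i y ord0 k * D k (im I) = g (re I)) ->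
  \sum_I zeta y I * wirtinger D I J0 = 0.
Proof.
move=> radial rot_re rot_im.
have := radial (re J0); have := radial (im J0); have := rot_re J0; have := rot_im J0.
rewrite !sum6 !cscale_i_re !cscale_i_im sum3 /wirtinger => r1 r2 r3 r4.
by apply/eqP; rewrite eq_complex /=; apply/andP; split; apply/eqP; lra.
Qed.

Lemma wirtinger_conj_zeta_right I0 :
  (forall c, \sum_k y ord0 k * D c k + g c = 0) ->
  (forall I, \sum_k cscale 'i y ord0 k * D (re I) k + g (im I) = 0) ->
  (forall I, \sum_k cscale 'i y ord0 k * D (im I) k - g (re I) = 0) ->
  \sum_J wirtinger D I0 J * (zeta y J)^* = 0.
Proof.
move=> radial rot_re rot_im.
have := radial (re I0); have := radial (im I0); have := rot_re I0; have := rot_im I0.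
rewrite !sum6 !cscale_i_re !cscale_i_im sum3 /wirtinger => r1 r2 r3 r4.
by apply/eqP; rewrite eq_complex /=; apply/andP; split; apply/eqP; lra.
Qed.

End WirtingerEuler.

End Coordinates.

Section Smooth.
Variable R : realType.
Local Notation V := 'rV[R]_(3 + 3).
Variable G : V -> R.
Hypothesis sG : smooth G.

Lemma smooth_pd b : smooth (pd b G).
Proof. by move=> ks; have := sG (ks ++ [:: b]); rewrite /iter_pd foldr_cat. Qed.

Lemma is_derive_smooth (y v : V) : y != 0 ->
  is_derive y v G (\sum_k v ord0 k * pd k G y).
Proof.
move=> y0; rewrite {1}(row_sum_delta v).
apply: (@is_derive_partials_sum _ _ _ G y (ebasis R)).
- by move: (near_neq0 y0); apply: filterS => z z0 k; case: (sG [::] z0).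
- by move=> k; case: (sG [:: k] y0).
Qed.

Lemma smooth_deriveE (y v : V) : y != 0 -> 'D_v G y = \sum_k v ord0 k * pd k G y.
Proof. by move=> y0; case: (is_derive_smooth v y0). Qed.

Lemma smooth_deriveD (y u w : V) : y != 0 -> 'D_(u + w) G y = 'D_u G y + 'D_w G y.
Proof.
move=> y0; rewrite !smooth_deriveE // -big_split.
by apply: eq_bigr => k _; rewrite !mxE mulrDl.
Qed.

Lemma smooth_deriveN (y u : V) : y != 0 -> 'D_(- u) G y = - 'D_u G y.
Proof.
move=> y0; rewrite !smooth_deriveE // -sumrN.
by apply: eq_bigr => k _; rewrite !mxE mulNr.
Qed.

Lemma smooth_deriveZ (y : V) (c : R) (u : V) : y != 0 -> 'D_(c *: u) G y = c * 'D_u G y.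
Proof.
move=> y0; rewrite !smooth_deriveE // mulr_sumr.
by apply: eq_bigr => k _; rewrite !mxE mulrA.
Qed.

End Smooth.

Section HomogeneousDegreeZero.
Variable R : realType.
Local Open Scope complex_scope.
Local Notation V := 'rV[R]_(3 + 3).
Local Notation J := (cscale 'i).
Variable F : V -> R.
Hypotheses (sF : smooth F) (hF : homog0 F).

Lemma homog0_real (s : R) (z : V) : s != 0 -> F (s *: z) = F z.
Proof.
by move=> s0; rewrite -cscale_real hF //; apply: contra s0 => /eqP[->].
Qed.

Lemma homog0_rot (t : R) (z : V) : F (z + t *: J z) = F z.
Proof. by rewrite -cscale_rot hF //; apply/eqP => -[/eqP]; rewrite oner_eq0. Qed.

Let near0_dilation : \forall t \near (0 : R), 1 + t != 0.
Proof.
apply: filterS (nbhs0_lt (V := R) ltr01) => t.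
by apply: contraTneq => /eqP; rewrite addrC addr_eq0 => /eqP ->; rewrite normrN normr1 ltxx.
Qed.

Lemma derive_radial_eq0 (y : V) : y != 0 -> 'D_y F y = 0.
Proof.
move=> y0; suff : is_derive y y F ((fun _ : R => 0) 0) by case.
apply: (is_derive_expansion (phi := fun=> 0)); last exact: cst_continuous.
move: near0_dilation; apply: filterS => t t1.
by rewrite mulr0 addr0 -{1}[y]scale1r -scalerDl homog0_real.
Qed.

Lemma derive_rot_eq0 (y : V) : 'D_(J y) F y = 0.
Proof.
suff : is_derive y (J y) F ((fun _ : R => 0) 0) by case.
apply: (is_derive_expansion (phi := fun=> 0)); last exact: cst_continuous.
by apply: filterE => t; rewrite mulr0 addr0 homog0_rot.
Qed.

Lemma derive_radial_pd (x : V) b : x != 0 -> 'D_x (pd b F) x = - pd b F x.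
Proof.
move=> x0.
pose phi t := - pd b F (x + t *: x).
suff : is_derive x x (pd b F) (phi 0) by case=> _ ->; rewrite /phi scale0r addr0.
apply: (is_derive_expansion (phi := phi)); last first.
  by apply: cvgN; apply: continuous_line; case: (sF [:: b] x0).
move: near0_dilation; apply: filterS => t t1.
(* pd b F is homogeneous of degree -1 under real dilations *)
have : pd b F x = (1 + t) * pd b F (x + t *: x).
  have tx0 : (1 + t) *: x != 0 by rewrite scaler_eq0 negb_or t1 x0.
  rewrite /pd (derive_comp_invariant (M := fun z => (1 + t) *: z)) => [|c u w|z].
  - by rewrite smooth_deriveZ // scalerDl scale1r.
  - by rewrite scalerDr !scalerA mulrC.
  - exact: homog0_real.
by rewrite /phi => ->; ring.
Qed.

Lemma derive_rot_pd (x : V) b b' (s : R) : x != 0 ->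
  J (ebasis R b) = s *: ebasis R b' -> 'D_(J x) (pd b F) x = - s * pd b' F x.
Proof.
move=> x0 Jb.
pose phi t := - s * pd b' F (x + t *: J x).
suff : is_derive x (J x) (pd b F) (phi 0) by case=> _ ->; rewrite /phi scale0r addr0.
apply: (is_derive_expansion (phi := phi)); last first.
  by apply: cvgM; [exact: cvg_cst | apply: continuous_line; case: (sF [:: b'] x0)].
move: (near_line (J x) (near_neq0 x0)); apply: filterS => t xt0.
have : pd b F x = pd b F (x + t *: J x) + t * (s * pd b' F (x + t *: J x)).
  rewrite /pd (derive_comp_invariant (M := fun z => z + t *: J z)) => [|c u w|z].
  - by rewrite Jb smooth_deriveD // !smooth_deriveZ.
  - by apply: zeta_inj => I; rewrite !(zetaD, zetaZ, zeta_cscale); ring.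
  - exact: homog0_rot.
by rewrite /phi => ->; ring.
Qed.

Lemma derive_euler_field (L : V -> V) (x : V) c :
  (forall (a : R) u w, L (a *: u + w) = a *: L u + L w) ->
  (forall y, y != 0 -> 'D_(L y) F y = 0) -> x != 0 ->
  \sum_k L x ord0 k * pd c (pd k F) x + 'D_(L (ebasis R c)) F x = 0.
Proof.
move=> Llin LF x0.
pose E := \sum_(k < 3 + 3) ((fun y : V => L y ord0 k) * pd k F).
have E0 y : y != 0 -> E y = 0.
  by move=> y0; rewrite /E fct_sumE -[RHS](LF y y0) smooth_deriveE //.
have coordD k : is_derive x (ebasis R c) (fun y : V => L y ord0 k)
    ((fun _ : R => L (ebasis R c) ord0 k) 0).
  apply: (is_derive_expansion (phi := fun=> L (ebasis R c) ord0 k)).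
    by apply: filterE => t; rewrite addrC Llin !mxE addrC.
  exact: cst_continuous.
have : is_derive x (ebasis R c) E ((fun _ : R => 0) 0).
  apply: (is_derive_expansion (G := E) (phi := fun=> 0)); last exact: cst_continuous.
  move: (near_line (ebasis R c) (near_neq0 x0)); apply: filterS => t xt0.
  by rewrite mulr0 addr0 !E0.
case=> _; rewrite /E derive_sum => [dE|k]; last first.
  by apply: derivableM; [case: (coordD k) | case: (sF [:: k] x0)].
rewrite -[RHS]dE smooth_deriveE // -big_split; apply: eq_bigr => k _ /=.
rewrite deriveM; [|by case: (coordD k)|by case: (sF [:: k] x0)].
by case: (coordD k) => _ ->; congr (_ + _); apply: mulrC.
Qed.

Lemma radial_hess_sum (x : V) b : x != 0 ->
  \sum_k x ord0 k * pd k (pd b F) x = - pd b F x.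
Proof.
by move=> x0; rewrite -(smooth_deriveE (smooth_pd sF b)) // derive_radial_pd.
Qed.

Lemma rot_hess_sum (x : V) b b' (s : R) : x != 0 -> J (ebasis R b) = s *: ebasis R b' ->
  \sum_k J x ord0 k * pd k (pd b F) x = - s * pd b' F x.
Proof.
by move=> x0 Jb; rewrite -(smooth_deriveE (smooth_pd sF b)) // (derive_rot_pd x0 Jb).
Qed.

Lemma hess_zeta_left (x : V) J0 : x != 0 -> \sum_I zeta x I * ddbar I J0 F x = 0.
Proof.
move=> x0.
apply: (wirtinger_zeta_left (D := fun a b => pd a (pd b F) x) (g := fun a => pd a F x))
  => [b|I|I].
- exact: radial_hess_sum.
- have Jre : J (ebasis R (re I)) = 1 *: ebasis R (im I).
    by rewrite scale1r cscale_i_ebasis_re.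
  by rewrite (rot_hess_sum x0 Jre) mulN1r.
- have Jim : J (ebasis R (im I)) = (-1) *: ebasis R (re I).
    by rewrite scaleN1r cscale_i_ebasis_im.
  by rewrite (rot_hess_sum x0 Jim) opprK mul1r.
Qed.

Lemma hess_conj_zeta_right (x : V) I0 : x != 0 ->
  \sum_J ddbar I0 J F x * (zeta x J)^* = 0.
Proof.
move=> x0.
apply: (wirtinger_conj_zeta_right (D := fun a b => pd a (pd b F) x) (g := fun a => pd a F x))
  => [c|I|I].
- exact: (derive_euler_field c (fun _ _ _ => erefl) derive_radial_eq0 x0).
- have := derive_euler_field (re I) (@cscale_linear R 'i) (fun y _ => derive_rot_eq0 y) x0.
  by rewrite cscale_i_ebasis_re.
- have := derive_euler_field (im I) (@cscale_linear R 'i) (fun y _ => derive_rot_eq0 y) x0.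
  by rewrite cscale_i_ebasis_im smooth_deriveN.
Qed.

End HomogeneousDegreeZero.

Theorem mainTheorem7 (R : realType) (f ft : 'rV[R]_(3 + 3) -> R) :
  in_E f -> harmonic_extension f ft ->
  forall x : 'rV[R]_(3 + 3), Ncone x -> hess11_norm2 ft x = 0.
Proof.
move=> _ [sF hF _ [h [_ hD]]] x [x0 Lx].
rewrite hess11_norm2_eta.
apply: (eta_trace_sqr_eq0 (H := fun I J => ddbar I J ft x) (z := zeta x)
  (p := fun I => (zeta x I)^*%C)).
- by move=> J; exact (hess_zeta_left sF hF J x0).
- by move=> I; exact (hess_conj_zeta_right sF hF I x0).
- by rewrite -Delta_eta hD // Lx mul0r.
- by rewrite Lform_zeta Lx.
- have [I zI] := zeta_neq0 x0; exists I; rewrite mulf_neq0 //.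
  by apply: contra zI => /eqP/(congr1 conjc); rewrite conjcK conjc0 => ->.
Qed.
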